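(* Let $\preceq$ be a binary relation on $L$. Then $\preceq$ is an E-relation if and only if $\preceq\, =\, \preceq_{\vec{\mathcal U}}$ for some $\vec{\mathcal U} \in \Upsilon$.
   Context: $L$ is a propositional language built from a finite set of propositional variables with the connectives $\neg,\wedge,\vee,\rightarrow,\top,\bot$; $W$ is the finite set of propositional worlds (truth assignments). For $\theta\in L$, $S_\theta=\{w\in W\mid w\models\theta\}$. For $E\cup\{\phi\}\subseteq L$, $E\models\phi$ means $\bigcap_{\theta\in E}S_\theta\subseteq S_\phi$; $\theta\models\phi$ means $\{\theta\}\models\phi$, and $\models\phi$ means $\emptyset\models\phi$. Sequences: consider finite sequences $\vec{\mathcal U}=(\mathcal U_0,\ldots,\mathcal U_k)$ ($k\ge 0$) of mutually disjoint subsets of $W$ (components may be empty, and $\emptyset$ may occur several times). For $\theta\in L$, $\mathrm{rank}^{\vec{\mathcal U}}(\theta)$ is the least $i$ with $\mathcal U_i\cap S_\theta\neq\emptyset$, and $\infty$ if there is no such $i$ (with $i<\infty$ for every integer $i$). Define $\theta\mid\!\sim_{\vec{\mathcal U}}\phi$ iff either $\mathrm{rank}^{\vec{\mathcal U}}(\theta)<\mathrm{rank}^{\vec{\mathcal U}}(\theta\wedge\neg\phi)$ or $\mathrm{rank}^{\vec{\mathcal U}}(\theta)=\infty$. $\vec{\mathcal U}$ is full iff $\bigcup_i\mathcal U_i=W$, and empty iff $\bigcup_i\mathcal U_i=\emptyset$; $\Upsilon$ is the set of all such sequences which are full or empty. For $\vec{\mathcal U}\in\Upsilon$ define $\preceq_{\vec{\mathcal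 U}}$ on $L$ by: $\theta\preceq_{\vec{\mathcal U}}\phi$ iff (it is not the case that $\neg\theta\vee\neg\phi\mid\!\sim_{\vec{\mathcal U}}\theta$) or $\neg\phi\mid\!\sim_{\vec{\mathcal U}}\bot$. An E-relation (epistemic entrenchment relation) is a relation $\preceq\subseteq L\times L$ such that for all $\theta,\phi,\psi\in L$: (E1) if $\theta\preceq\phi$ and $\phi\preceq\psi$ then $\theta\preceq\psi$; (E2) if $\theta\models\phi$ then $\theta\preceq\phi$; (E3) $\theta\preceq\theta\wedge\phi$ or $\phi\preceq\theta\wedge\phi$; (E4) if there exists $\psi\in L$ with $\bot\prec\psi$, then whenever $\theta\preceq\phi$ for all $\theta\in L$, we have $\models\phi$. Here $\prec$ is the strict part: $\theta\prec\phi$ iff $\theta\preceq\phi$ and not $\phi\preceq\theta$. *)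

From mathcomp Require Import all_boot.
Set Implicit Arguments. Unset Strict Implicit. Unset Printing Implicit Defensive.

Section Defs.
Variable V : finType.

Inductive form : Type :=
  | Var of V
  | Neg of form
  | And of form & form
  | Or of form & form
  | Imp of form & form
  | Top
  | Bot.

Definition world := {ffun V -> bool}.

Fixpoint sat (w : world) (f : form) : bool :=
  match f with
  | Var p => w p
  | Neg g => ~~ sat w g
  | And g h => sat w g && sat w h
  | Or g h => sat w g || sat w h
  | Imp g h => sat w g ==> sat w h
  | Top => true
  | Bot => false
  end.

Definition S (f : form) : {set world} := [set w | sat w f].

Definition entails (t f : form) : Prop := S t \subset S f.
Definition valid (f : form) : Prop := [set: world] \subset S f.

Definition is_seq (U : seq {set world}) : Prop :=
  0 < size U /\
  forall i j, i < size U -> j < size U -> i != j ->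
    nth set0 U i :&: nth set0 U j = set0.

(* rank; None stands for infinity *)
Definition rank (U : seq {set world}) (f : form) : option nat :=
  let i := find (fun A : {set world} => A :&: S f != set0) U in
  if i < size U then Some i else None.

Definition lt_rank (a b : option nat) : bool :=
  match a, b with
  | Some i, Some j => i < j
  | Some _, None => true
  | None, _ => false
  end.

Definition nmsim (U : seq {set world}) (t f : form) : bool :=
  lt_rank (rank U t) (rank U (And t (Neg f))) || (rank U t == None).

Definition full (U : seq {set world}) : bool :=
  \bigcup_(A <- U) A == [set: world].
Definition emptyseq (U : seq {set world}) : bool :=
  \bigcup_(A <- U) A == set0.

Definition in_Upsilon (U : seq {set world}) : Prop :=
  is_seq U /\ (full U \/ emptyseq U).

Definition preceq_U (U : seq {set world}) (t f : form) : Prop :=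
  ~~ nmsim U (Or (Neg t) (Neg f)) t \/ nmsim U (Neg f) Bot.

Definition E_relation (R : form -> form -> Prop) : Prop :=
  (forall t f g, R t f -> R f g -> R t g) /\
  (forall t f, entails t f -> R t f) /\
  (forall t f, R t (And t f) \/ R f (And t f)) /\
  ((exists g, R Bot g /\ ~ R g Bot) ->
     forall f, (forall t, R t f) -> valid f).

End Defs.

From mathcomp Require Import all_boot zify boolp.
Set Implicit Arguments. Unset Strict Implicit. Unset Printing Implicit Defensive.

(* Unfolding the definitions, theta <=_U phi iff rank_U(~theta) <= rank_U(~phi), and
   comparing ranks of negations is readily an E-relation.  Conversely, an E-relation <=
   is determined by its values on the coworld formulas ~chi_w, false exactly at the
   world w.  A non-tautology theta is equivalent to the conjunction of the coworlds of
   its countermodels, so by (E3) and (E1) it is <=-equivalent to the least entrenched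
   of them, while by (E4) the tautologies sit strictly above all other formulas.
   Layering the worlds by the entrenchment of their coworlds thus gives a full
   sequence U with <= = <=_U; when everything is <=-equivalent to Bot, the empty
   sequence does. *)

Section Ranks.
Variable V : finType.
Implicit Types (U : seq {set world V}) (a b g t f : form V).

(* [rank U g], with infinity encoded as [size U]. *)
Definition rankn U g := find (fun A : {set world V} => A :&: S g != set0) U.

Lemma rankn_le_size U g : rankn U g <= size U.
Proof. exact: find_size. Qed.

Lemma lt_rank_rankn U a b : lt_rank (rank U a) (rank U b) = (rankn U a < rankn U b).
Proof.
rewrite /rank -/(rankn U a) -/(rankn U b).
have := rankn_le_size U a; have := rankn_le_size U b.
by case: (ltnP (rankn U a)); case: (ltnP (rankn U b)) => /=; lia.
Qed.

Lemma rank_NoneE U g : (rank U g == None) = (rankn U g == size U).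
Proof.
rewrite /rank -/(rankn U g); have := rankn_le_size U g.
by case: (ltnP (rankn U g)) => [/ltn_eqF -> //|ge le]; rewrite eqxx eqn_leq ge le.
Qed.

Lemma rankn_eqS U a b : S a = S b -> rankn U a = rankn U b.
Proof. by rewrite /rankn => ->. Qed.

Lemma S_Neg g : S (Neg g) = ~: S g.
Proof. by apply/setP => w; rewrite !inE. Qed.

Lemma rankn_Or U a b : rankn U (Or a b) = minn (rankn U a) (rankn U b).
Proof.
have SOr : S (Or a b) = S a :|: S b by apply/setP => w; rewrite !inE.
rewrite /rankn SOr; elim: U => [|A U IH] //=; rewrite setIUr setU_eq0 negb_and IH.
by case: (A :&: S a != set0); case: (A :&: S b != set0); rewrite //= minnSS.
Qed.

Lemma rankn_antitone U a b : S a \subset S b -> rankn U b <= rankn U a.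
Proof.
move=> sab; rewrite (@rankn_eqS U b (Or a b)) ?rankn_Or ?geq_minl //.
by apply/setP => w; move/subsetP: sab => /(_ w); rewrite !inE /=; case: (sat w a) => // ->.
Qed.

Lemma rankn_set0 U g : S g = set0 -> rankn U g = size U.
Proof. by move=> Sg; apply/hasNfind/hasPn => A _; rewrite Sg setI0 eqxx. Qed.

Lemma rankn_emptyseq U g : emptyseq U -> rankn U g = size U.
Proof.
rewrite /emptyseq bigcup_seq => /eqP U0; apply/hasNfind/hasPn => A AU.
by rewrite negbK -subset0 -U0 (subset_trans (subsetIl _ _) (bigcup_sup _ AU)).
Qed.

Lemma rankn_full U g : full U -> rankn U g = size U -> S g = set0.
Proof.
rewrite /full bigcup_seq => /eqP UT gU; apply/setP => w; rewrite in_set0; apply/negP => gw.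
have /bigcupP [A AU wA] : w \in \bigcup_(A in U) A by rewrite UT inE.
have : has (fun A : {set world V} => A :&: S g != set0) U.
  by apply/hasP; exists A => //; apply/set0Pn; exists w; rewrite in_setI wA.
by rewrite has_find -/(rankn U g) gU ltnn.
Qed.

Lemma preceq_UE U t f : preceq_U U t f <-> rankn U (Neg t) <= rankn U (Neg f).
Proof.
rewrite /preceq_U /nmsim !lt_rank_rankn !rank_NoneE rankn_Or.
rewrite (@rankn_eqS U (And (Or _ _) _) (Neg t)); last first.
  by apply/setP => w; rewrite !inE /=; case: (sat w t); rewrite ?andbF.
rewrite (@rankn_eqS U (And (Neg f) _) (Neg f)) ?ltnn; last first.
  by apply/setP => w; rewrite !inE /= andbT.
have := rankn_le_size U (Neg t); have := rankn_le_size U (Neg f).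
set x := rankn U (Neg t); set y := rankn U (Neg f); move=> yn xn.
case: (leqP x y) => xy; rewrite ?ltnn ?xy /=; split => //.
  by case: (x =P size U) => [xU | _] _; [right; apply/eqP; lia | left].
by case=> // /eqP yU; lia.
Qed.

Lemma E_relation_iff (R R' : form V -> form V -> Prop) :
  (forall t f, R t f <-> R' t f) -> E_relation R -> E_relation R'.
Proof.
move=> RR' [E1 [E2 [E3 E4]]]; split; [|split; [|split]].
- by move=> t f g /RR' tf /RR' fg; apply/RR'/(E1 _ f).
- by move=> t f /E2 /RR'.
- by move=> t f; have := E3 t f; rewrite !RR'.
- move=> [g [/RR' Bg gB]] f fmax; apply: E4 => [|t]; last exact/RR'.
  by exists g; split => // /RR'.
Qed.

Lemma E_relation_rankn U : full U \/ emptyseq U ->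
  E_relation (fun t f => rankn U (Neg t) <= rankn U (Neg f)).
Proof.
move=> UfE; split; [|split; [|split]].
- by move=> t f g /leq_trans; apply.
- by move=> t f tf; apply/rankn_antitone; rewrite !S_Neg setCS.
- move=> t f; have -> : rankn U (Neg (And t f)) = rankn U (Or (Neg t) (Neg f)).
    by apply: rankn_eqS; apply/setP => w; rewrite !inE /= negb_and.
  by rewrite rankn_Or; case: (leqP (rankn U (Neg t)) (rankn U (Neg f))); [left | right; lia].
- move=> [g [_ gB]] f fmax; case: UfE => [UT | U0]; last by rewrite !rankn_emptyseq in gB.
  have Tf := fmax (Top V); rewrite (@rankn_set0 _ (Neg (Top V))) in Tf; last first.
    by apply/setP => w; rewrite !inE.
  have /(rankn_full UT) : rankn U (Neg f) = size U by apply/eqP; rewrite eqn_leq Tf rankn_le_size.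
  by rewrite S_Neg /valid -setCS => ->; rewrite sub0set.
Qed.

Lemma E_relation_preceq_U U : in_Upsilon U -> E_relation (preceq_U U).
Proof.
move=> [_ UfE]; apply: E_relation_iff (E_relation_rankn UfE) => t f.
exact: iff_sym (preceq_UE U t f).
Qed.

Lemma preceq_U_emptyseq U t f : emptyseq U -> preceq_U U t f.
Proof. by move=> U0; apply/preceq_UE; rewrite !rankn_emptyseq. Qed.

Definition layers (r : world V -> nat) n : seq {set world V} :=
  mkseq (fun i => [set w | r w == i]) n.

Section Layers.
Variables (r : world V -> nat) (n : nat).
Hypothesis r_lt : forall w, r w < n.

Lemma layers_Upsilon : in_Upsilon (layers r n).
Proof.
rewrite /in_Upsilon /is_seq /full size_mkseq; split; [split|left].
- exact: leq_ltn_trans (leq0n _) (r_lt [ffun=> true]).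
- move=> i j ilt jlt ij; rewrite !nth_mkseq //; apply/setP => w; rewrite !inE.
  by apply/negbTE/negP => /andP [/eqP ri /eqP rj]; rewrite -ri -rj eqxx in ij.
- apply/eqP/setP => w; rewrite bigcup_seq inE; apply/bigcupP.
  exists (nth set0 (layers r n) (r w)); first by rewrite mem_nth ?size_mkseq.
  by rewrite nth_mkseq // inE.
Qed.

Lemma rankn_layers g w : sat w g -> (forall u, sat u g -> r w <= r u) ->
  rankn (layers r n) g = r w.
Proof.
move=> gw wmin; apply/eqP; rewrite eqn_leq; apply/andP; split.
- rewrite leqNgt; apply/negP => /(before_find set0); rewrite nth_mkseq //.
  by move/negbFE/set0Pn; case; exists w; rewrite !inE eqxx.
- rewrite /rankn; case: findP => [_ | i]; first by rewrite size_mkseq ltnW.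
  rewrite size_mkseq => ilt /(_ set0) /set0Pn [u]; rewrite nth_mkseq // !inE => /andP [/eqP <- gu].
  by move=> _; apply: wmin.
Qed.

End Layers.

Lemma Upsilon_set0 : in_Upsilon [:: set0 : {set world V}].
Proof.
split; first by split => // -[|i] [|j].
by right; rewrite /emptyseq big_cons big_nil setU0.
Qed.

End Ranks.

Section Coworlds.
Variable V : finType.

Definition bigAnd (s : seq (form V)) : form V := foldr (@And V) (Top V) s.

Lemma sat_bigAnd (w : world V) s : sat w (bigAnd s) = all (sat w) s.
Proof. by elim: s => //= g s ->. Qed.

Definition coworld (w : world V) : form V :=
  Neg (bigAnd [seq if w x then Var x else Neg (Var x) | x <- enum V]).

Lemma sat_coworld (u w : world V) : sat u (coworld w) = (u != w).
Proof.
rewrite /= sat_bigAnd all_map; congr negb.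
apply/allP/eqP => [uw | -> x _]; last by rewrite /=; case wx: (w x); rewrite /= wx.
apply/(ffunP u w) => x; have := uw x (mem_enum _ x).
by rewrite /=; case: (w x) => /= [-> | /negbTE ->].
Qed.

End Coworlds.

Section Completeness.
Variables (V : finType) (R : form V -> form V -> Prop).
Hypothesis HR : E_relation R.
Implicit Types (t f g : form V) (v w : world V).

Lemma R_trans t f g : R t f -> R f g -> R t g.
Proof. by case: HR => E1 _; apply: E1. Qed.

Lemma R_entails t f : entails t f -> R t f.
Proof. by case: HR => _ [E2 _]; apply: E2. Qed.

Lemma R_And t f : R t (And t f) \/ R f (And t f).
Proof. by case: HR => _ [_ [E3 _]]; apply: E3. Qed.

Lemma R_refl t : R t t.
Proof. exact/R_entails/subxx. Qed.

Lemma R_total t f : R t f \/ R f t.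
Proof.
by case: (R_And t f) => tf; [left | right]; apply: R_trans tf _; apply: R_entails;
  apply/subsetP => w; rewrite !inE => /andP [].
Qed.

Lemma R_bigAnd (F : world V -> form V) (s : seq (world V)) : s != [::] ->
  exists2 w, w \in s & R (F w) (bigAnd (map F s)).
Proof.
elim: s => [|v s IH] // _; case: (R_And (F v) (bigAnd (map F s))) => Fv.
  by exists v; rewrite ?mem_head.
case: s IH Fv => [_ | u s IH] Fv.
  by exists v; rewrite ?mem_head //; apply: R_entails; apply/subsetP => w; rewrite !inE /= andbT.
have [w ws Fw] := IH isT; exists w; first by rewrite inE ws orbT.
exact: R_trans Fw Fv.
Qed.

Lemma exists_R_coworld_le t w0 : ~~ sat w0 t -> exists2 w, ~~ sat w t & R (coworld w) t.
Proof.
move=> tw0; set s := enum [set w | ~~ sat w t].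
have [|w] := @R_bigAnd (@coworld V) s.
  by rewrite -size_eq0 -cardE -lt0n; apply/card_gt0P; exists w0; rewrite inE.
rewrite mem_enum inE => tw wt; exists w => //; apply: R_trans wt (R_entails _).
apply/subsetP => v; rewrite !inE sat_bigAnd all_map; apply: contraLR => tv.
by apply/allPn; exists v; rewrite ?mem_enum ?inE // (@sat_coworld V v v) eqxx.
Qed.

Lemma R_le_coworld t w : ~~ sat w t -> R t (coworld w).
Proof.
move=> tw; apply: R_entails; apply/subsetP => v; rewrite !inE sat_coworld.
by apply: contraTneq => ->.
Qed.

Definition less_entrenched w : {set world V} :=
  [set v | `[< R (coworld v) (coworld w) /\ ~ R (coworld w) (coworld v) >]].

Definition wrank w := #|less_entrenched w|.

Lemma wrank_lt_card w : wrank w < #|world V|.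
Proof.
rewrite /wrank /less_entrenched -cardsT; apply: proper_card; rewrite properT; apply/eqP => wT.
have : w \in [set: world V] by rewrite inE.
by rewrite -wT inE => /asboolP [ww /(_ ww)].
Qed.

Lemma wrank_leP v w : R (coworld v) (coworld w) <-> wrank v <= wrank w.
Proof.
have below_sub a b : R (coworld a) (coworld b) -> less_entrenched a \subset less_entrenched b.
  move=> ab; apply/subsetP => u; rewrite !inE => /asboolP [ua au]; apply/asboolP.
  by split; [apply: R_trans ua ab | move=> bu; apply/au/(R_trans ab)].
split => [vw | ]; first exact/subset_leq_card/below_sub.
case: (pselect (R (coworld v) (coworld w))) => // nvw; rewrite leqNgt => /negP; case.
have wv : R (coworld w) (coworld v) by case: (R_total (coworld v) (coworld w)).
apply: proper_card; apply/properP; split; first exact: below_sub.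
by exists w; rewrite !inE; apply/asboolP; [split | case=> _ /(_ (R_refl _))].
Qed.

Lemma R_equiv_min_coworld t w0 : ~~ sat w0 t ->
  (forall w, ~~ sat w t -> wrank w0 <= wrank w) -> R t (coworld w0) /\ R (coworld w0) t.
Proof.
move=> tw0 w0min; split; first exact: R_le_coworld.
have [w tw wt] := exists_R_coworld_le tw0.
exact: R_trans (proj2 (wrank_leP _ _) (w0min w tw)) wt.
Qed.

Definition wlayers := layers wrank #|world V|.

Lemma wlayers_Upsilon : in_Upsilon wlayers.
Proof. exact: layers_Upsilon wrank_lt_card. Qed.

Lemma rankn_wlayers_valid t : valid t -> rankn wlayers (Neg t) = #|world V|.
Proof.
move=> tT; rewrite rankn_set0 ?size_mkseq //; apply/setP => w.
by rewrite !inE /=; have := subsetP tT w; rewrite !inE => ->.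
Qed.

Lemma rankn_wlayers_nonvalid t : ~ valid t ->
  exists w0, [/\ R t (coworld w0), R (coworld w0) t & rankn wlayers (Neg t) = wrank w0].
Proof.
move/negP/subsetPn => [w1 _]; rewrite inE => tw1.
case: (@arg_minnP _ w1 (fun w => ~~ sat w t) wrank tw1) => w0 tw0 w0min.
have [t_w0 w0_t] := R_equiv_min_coworld tw0 w0min.
by exists w0; split => //; apply: (rankn_layers (g := Neg t) wrank_lt_card tw0 w0min).
Qed.

Definition nontrivial := exists g, R (Bot V) g /\ ~ R g (Bot V).

Lemma R_valid_of_ge_all : nontrivial -> forall f, (forall t, R t f) -> valid f.
Proof. by case: HR => _ [_ [_ E4]]. Qed.

Lemma R_rankn_wlayers t f : nontrivial ->
  R t f <-> rankn wlayers (Neg t) <= rankn wlayers (Neg f).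
Proof.
move=> NT; have valid_ge g h : valid h -> R g h.
  by move=> hT; apply: R_entails; apply: subset_trans (subsetT _) hT.
case: (pselect (valid f)) => [fT | fnT].
  rewrite (rankn_wlayers_valid fT); split => _; last exact: valid_ge fT.
  by have := rankn_le_size wlayers (Neg t); rewrite size_mkseq.
have [w1 [f_w1 w1_f ->]] := rankn_wlayers_nonvalid fnT.
case: (pselect (valid t)) => [tT | tnT].
  rewrite (rankn_wlayers_valid tT) leqNgt wrank_lt_card; split => // tf; case: fnT.
  by apply: R_valid_of_ge_all NT _ _ => g; apply: R_trans (valid_ge _ _ tT) tf.
have [w0 [t_w0 w0_t ->]] := rankn_wlayers_nonvalid tnT.
rewrite -wrank_leP; split => [tf | w0w1].
  exact: R_trans w0_t (R_trans tf f_w1).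
exact: R_trans t_w0 (R_trans w0w1 w1_f).
Qed.

Lemma R_trivial : ~ nontrivial -> forall t f, R t f.
Proof.
move=> T t f; have tB : R t (Bot V).
  case: (pselect (R t (Bot V))) => // tB; case: T; exists t; split => //.
  by apply: R_entails; apply/subsetP => w; rewrite inE.
by apply: R_trans tB (R_entails _); apply/subsetP => w; rewrite inE.
Qed.

End Completeness.

Theorem proposition3 (V : finType) (R : form V -> form V -> Prop) :
  E_relation R <->
  exists U : seq {set world V},
    in_Upsilon U /\ (forall t f, R t f <-> preceq_U U t f).
Proof.
split=> [HR | [U [HU RU]]]; last first.
  exact: E_relation_iff (fun t f => iff_sym (RU t f)) (E_relation_preceq_U HU).
case: (pselect (nontrivial R)) => [NT | T].
  exists (wlayers R); split; first exact: wlayers_Upsilon.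
  by move=> t f; rewrite preceq_UE; apply: R_rankn_wlayers.
exists [:: set0]; split; first exact: Upsilon_set0.
by move=> t f; split=> _; [apply: preceq_U_emptyseq; rewrite /emptyseq big_seq1 | apply: R_trivial].
Qed.
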